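(* Let $\mathcal{L}=(\mathrm{Fm},\vdash)$ be a selfextensional logic for which $\neg_S$ and $\neg_A$ hold, and let $N\subseteq\mathrm{Fm}\times\mathrm{Fm}$ be a normative system closed under (SI). Then $$D_N=\{(\alpha,\varphi)\mid(\neg\alpha,\varphi)\notin N\}.$$
   Context: Logic $\mathcal{L}=(\mathrm{Fm},\vdash)$ with $\vdash$ a consequence relation; $Cn(\Gamma)=\{\psi\mid\Gamma\vdash\psi\}$, $Cn(\varphi,\psi)=Cn(\{\varphi,\psi\})$; $\varphi\vdash\psi$ means $\{\varphi\}\vdash\psi$. Selfextensional: interderivable formulas $\varphi,\psi$ yield interderivable $\delta(\varphi/p),\delta(\psi/p)$ for all $\delta$. $\neg_W$: a unary term $\neg$ with $\psi\in Cn(\varphi)\Rightarrow\neg\varphi\in Cn(\neg\psi)$; for such $\neg$: $\neg_A$: $Cn(\varphi,\neg\varphi)=\mathrm{Fm}$; $\neg_S$: $Cn(\varphi,\psi)=\mathrm{Fm}\Rightarrow\neg\psi\in Cn(\varphi)$. $N$ closed under (SI): $(\alpha,\varphi)\in N$ and $\beta\vdash\alpha$ imply $(\beta,\varphi)\in N$. Dual negative permission system: $D_N=\{(\alpha,\varphi)\mid\exists\beta((\beta,\varphi)\notin N\ \&\ Cn(\alpha,\beta)=\mathrm{Fm})\}$. *)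

From Stdlib Require Import Fin.
Set Implicit Arguments.

Inductive fm (Op : Type) (ar : Op -> nat) : Type :=
| Var : nat -> fm ar
| App : forall o : Op, (Fin.t (ar o) -> fm ar) -> fm ar.
Arguments Var {Op ar} _.
Arguments App {Op ar} _ _.

Fixpoint subst {Op : Type} {ar : Op -> nat} (s : nat -> fm ar) (t : fm ar) : fm ar :=
  match t with
  | Var n => s n
  | App o f => App o (fun i => subst s (f i))
  end.

(* delta(phi/p): replace variable p by phi *)
Definition subst1 {Op : Type} {ar : Op -> nat} (p : nat) (phi : fm ar) (delta : fm ar) : fm ar :=
  subst (fun n => if Nat.eqb n p then phi else Var n) delta.

Fixpoint occurs {Op : Type} {ar : Op -> nat} (n : nat) (t : fm ar) : Prop :=
  match t with
  | Var m => n = m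
  | App o f => exists i, occurs n (f i)
  end.

Definition is_consequence {Op : Type} {ar : Op -> nat}
  (cons : (fm ar -> Prop) -> fm ar -> Prop) : Prop :=
  (forall (G : fm ar -> Prop) phi, G phi -> cons G phi) /\
  (forall (G D : fm ar -> Prop) phi, (forall x, G x -> D x) -> cons G phi -> cons D phi) /\
  (forall (G D : fm ar -> Prop) phi, (forall x, D x -> cons G x) -> cons D phi -> cons G phi).

Definition sing {Op : Type} {ar : Op -> nat} (a : fm ar) : fm ar -> Prop := fun x => x = a.
Definition pair2 {Op : Type} {ar : Op -> nat} (a b : fm ar) : fm ar -> Prop :=
  fun x => x = a \/ x = b.

Definition der1 {Op : Type} {ar : Op -> nat} (cons : (fm ar -> Prop) -> fm ar -> Prop)
  (phi psi : fm ar) : Prop := cons (sing phi) psi.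

Definition explosive2 {Op : Type} {ar : Op -> nat} (cons : (fm ar -> Prop) -> fm ar -> Prop)
  (phi psi : fm ar) : Prop := forall chi, cons (pair2 phi psi) chi.

Definition selfextensional {Op : Type} {ar : Op -> nat}
  (cons : (fm ar -> Prop) -> fm ar -> Prop) : Prop :=
  forall phi psi, der1 cons phi psi -> der1 cons psi phi ->
  forall (delta : fm ar) (p : nat),
    der1 cons (subst1 p phi delta) (subst1 p psi delta) /\
    der1 cons (subst1 p psi delta) (subst1 p phi delta).

(* a unary term negt in the variable p; neg phi := negt(phi/p) *)
Definition unary_term {Op : Type} {ar : Op -> nat} (p : nat) (negt : fm ar) : Prop :=
  forall n, occurs n negt -> n = p.

Definition neg {Op : Type} {ar : Op -> nat} (p : nat) (negt : fm ar) (phi : fm ar) : fm ar :=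
  subst1 p phi negt.

Definition negW {Op : Type} {ar : Op -> nat} (cons : (fm ar -> Prop) -> fm ar -> Prop)
  (p : nat) (negt : fm ar) : Prop :=
  forall phi psi, der1 cons phi psi -> der1 cons (neg p negt psi) (neg p negt phi).

Definition negA {Op : Type} {ar : Op -> nat} (cons : (fm ar -> Prop) -> fm ar -> Prop)
  (p : nat) (negt : fm ar) : Prop :=
  forall phi, explosive2 cons phi (neg p negt phi).

Definition negS {Op : Type} {ar : Op -> nat} (cons : (fm ar -> Prop) -> fm ar -> Prop)
  (p : nat) (negt : fm ar) : Prop :=
  forall phi psi, explosive2 cons phi psi -> der1 cons phi (neg p negt psi).

Definition closed_SI {Op : Type} {ar : Op -> nat} (cons : (fm ar -> Prop) -> fm ar -> Prop)
  (N : fm ar -> fm ar -> Prop) : Prop :=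
  forall alpha beta phi, N alpha phi -> der1 cons beta alpha -> N beta phi.

Definition D_N {Op : Type} {ar : Op -> nat} (cons : (fm ar -> Prop) -> fm ar -> Prop)
  (N : fm ar -> fm ar -> Prop) (alpha phi : fm ar) : Prop :=
  exists beta, ~ N beta phi /\ explosive2 cons alpha beta.


(* By the negation property S, every [beta] with Cn(alpha, beta) = Fm derives [neg alpha],
   so by (SI) [(neg alpha, phi) \in N] would force [(beta, phi) \in N]; conversely, by
   property A, [neg alpha] is itself such a [beta]. *)

Section DualNegativePermission.

Variables (Op : Type) (ar : Op -> nat).
Variable cons : (fm ar -> Prop) -> fm ar -> Prop.
Hypothesis cons_is_consequence : is_consequence cons.

Lemma explosive2_sym (alpha beta : fm ar) :
  explosive2 cons alpha beta -> explosive2 cons beta alpha.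
Proof.
  destruct cons_is_consequence as [_ [cons_mono _]].
  intros explosive chi.
  apply (cons_mono (pair2 alpha beta)); [|apply explosive].
  intros x [-> | ->]; unfold pair2; auto.
Qed.

Variables (p : nat) (negt : fm ar) (N : fm ar -> fm ar -> Prop).

Lemma not_N_neg_of_D_N (alpha phi : fm ar) :
  negS cons p negt -> closed_SI cons N ->
  D_N cons N alpha phi -> ~ N (neg p negt alpha) phi.
Proof.
  intros neg_S N_SI [beta [beta_notin_N explosive]] neg_alpha_in_N.
  apply beta_notin_N, (N_SI (neg p negt alpha)); [exact neg_alpha_in_N|].
  apply neg_S, explosive2_sym, explosive.
Qed.

Lemma D_N_of_not_N_neg (alpha phi : fm ar) :
  negA cons p negt -> ~ N (neg p negt alpha) phi -> D_N cons N alpha phi.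
Proof.
  intros neg_A neg_alpha_notin_N.
  exists (neg p negt alpha); split; [exact neg_alpha_notin_N | apply neg_A].
Qed.

End DualNegativePermission.

Theorem proposition4p7 (Op : Type) (ar : Op -> nat)
  (cons : (fm ar -> Prop) -> fm ar -> Prop) (p : nat) (negt : fm ar)
  (N : fm ar -> fm ar -> Prop) :
  is_consequence cons ->
  selfextensional cons ->
  unary_term p negt ->
  negW cons p negt ->
  negS cons p negt ->
  negA cons p negt ->
  closed_SI cons N ->
  forall alpha phi : fm ar, D_N cons N alpha phi <-> ~ N (neg p negt alpha) phi.
Proof.
  intros cons_is_consequence _ _ _ neg_S neg_A N_SI alpha phi; split.
  - now apply not_N_neg_of_D_N.
  - now apply D_N_of_not_N_neg.
Qed.
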